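(* Under the standing setup with $\gamma>0$, the Nash equilibrium $(g^*,h^* )$ of the zero-sum game in which Georgia chooses $g\in[0,\underline s]$ to minimize $f(g,h)$ and Hank chooses $h\in[\overline s,1]$ to maximize $f(g,h)$ is as follows: (i) if $m(0,1)\ge0$, then $(g^*,h^* )=(0,1)$ if $q(0,1)\ge0$; $(g^*,h^* )=(0,\overline s)$ if $q(0,\overline s)\le0$; and $(g^*,h^* )=(0,r(0))$ otherwise; (ii) if $m(\underline s,1)\le0$, then $(g^*,h^* )=(\underline s,1)$; (iii) otherwise, $(g^*,h^* )=(w(1),1)$.
   Context: Standing setup. Fix $n\in\mathbb N$ and $W=[w_{ij}]\in\mathbb R^{n\times n}$ with $w_{ij}\ge0$, $w_{ii}=0$. Let $\|W\|_\infty=\max_i\sum_j|w_{ij}|$, $\|W\|_1=\max_j\sum_i|w_{ij}|$, let $\lambda$ be the spectral radius of $W$, and assume there is $c\in\mathbb R^n$ with all entries positive and $W^\top c=\lambda c$. Fix $\beta\ge\gamma\ge0$ with $1-\max\{\|W\|_\infty,\|W\|_1\}>\max\{2\beta,4\gamma\}$. Fix $s\in[0,1]^n$, $\overline s=\max_is_i$, $\underline s=\min_is_i$. Set $\widehat c_i=c_i/\sum_jc_j$, $\widehat s=\sum_i\widehat c_is_i$, $\chi=\sum_i\widehat c_is_i\sum_jw_{ij}$. Define $$f(g,h)=\frac{(1-2\beta+(h-g)\gamma)\widehat s-\chi+(h+g)\beta+(g^2-h^2)\gamma}{1-\lambda+(g-h)\gamma}\,c^\top\mathbf 1$$ (the centrality-weighted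 steady state of the opinion dynamics with sources $g,h$), and $$q(g,h)=(\beta+\gamma\widehat s-2\gamma h)(1-\lambda+\gamma g)+\gamma\big[(1-2\beta-g\gamma)\widehat s-\chi+g\beta+g^2\gamma\big]+\gamma^2h^2,$$ $$m(g,h)=(\beta-\gamma\widehat s+2\gamma g)(1-\lambda-h\gamma)+g^2\gamma^2-\gamma\big[(1-2\beta+h\gamma)\widehat s+h\beta-h^2\gamma-\chi\big],$$ $$r(g)=\frac{1-\lambda}{\gamma}+g-\frac{1}{\gamma}\sqrt{(1-\lambda)(1-\lambda-\beta+2g\gamma)-(2-\lambda-2\beta)\gamma\widehat s-2g\beta\gamma+\gamma\chi},$$ $$w(h)=\frac{1}{\gamma}\sqrt{(1-\lambda)(1-\lambda-2h\gamma-\beta)+(2-\lambda-2\beta)\gamma\widehat s+2h\beta\gamma-\chi\gamma}-\frac{1-\lambda}{\gamma}+h.$$ *)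

From Stdlib Require Import Reals Lra.
Open Scope R_scope.

Fixpoint sumR (n : nat) (f : nat -> R) : R :=
  match n with O => 0 | S k => sumR k f + f k end.

(* for n >= 1: max_{i<n} f i  (resp. min) *)
Fixpoint bigmax (n : nat) (f : nat -> R) : R :=
  match n with O => f O | S k => Rmax (bigmax k f) (f k) end.
Fixpoint bigmin (n : nat) (f : nat -> R) : R :=
  match n with O => f O | S k => Rmin (bigmin k f) (f k) end.

Definition norm_inf (n : nat) (W : nat -> nat -> R) : R :=
  bigmax n (fun i => sumR n (fun j => Rabs (W i j))).
Definition norm_1 (n : nat) (W : nat -> nat -> R) : R :=
  bigmax n (fun j => sumR n (fun i => Rabs (W i j))).

(* a + i b is a (complex) eigenvalue of the real matrix W: there is a nonzero
   complex vector x + i y with W (x + i y) = (a + i b)(x + i y). *)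
Definition is_eigenvalue_C (n : nat) (W : nat -> nat -> R) (a b : R) : Prop :=
  exists x y : nat -> R,
    (exists i, (i < n)%nat /\ (x i <> 0 \/ y i <> 0)) /\
    forall i, (i < n)%nat ->
      sumR n (fun j => W i j * x j) = a * x i - b * y i /\
      sumR n (fun j => W i j * y j) = b * x i + a * y i.

Definition is_spectral_radius (n : nat) (W : nat -> nat -> R) (lam : R) : Prop :=
  (exists a b, is_eigenvalue_C n W a b /\ sqrt (a ^ 2 + b ^ 2) = lam) /\
  (forall a b, is_eigenvalue_C n W a b -> sqrt (a ^ 2 + b ^ 2) <= lam).

Definition shat (n : nat) (c s : nat -> R) : R :=
  sumR n (fun i => (c i / sumR n c) * s i).
Definition chi (n : nat) (W : nat -> nat -> R) (c s : nat -> R) : R :=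
  sumR n (fun i => (c i / sumR n c) * s i * sumR n (fun j => W i j)).

Definition f_fun (lam beta gamma sh ch C g h : R) : R :=
  ((1 - 2*beta + (h - g)*gamma) * sh - ch + (h + g)*beta + (g^2 - h^2)*gamma)
  / (1 - lam + (g - h)*gamma) * C.

Definition q_fun (lam beta gamma sh ch g h : R) : R :=
  (beta + gamma*sh - 2*gamma*h) * (1 - lam + gamma*g)
  + gamma * ((1 - 2*beta - g*gamma)*sh - ch + g*beta + g^2*gamma)
  + gamma^2 * h^2.

Definition m_fun (lam beta gamma sh ch g h : R) : R :=
  (beta - gamma*sh + 2*gamma*g) * (1 - lam - h*gamma) + g^2 * gamma^2
  - gamma * ((1 - 2*beta + h*gamma)*sh + h*beta - h^2*gamma - ch).

Definition r_fun (lam beta gamma sh ch g : R) : R :=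
  (1 - lam)/gamma + g
  - (1/gamma) * sqrt ((1 - lam)*(1 - lam - beta + 2*g*gamma)
                      - (2 - lam - 2*beta)*gamma*sh - 2*g*beta*gamma + gamma*ch).

Definition w_fun (lam beta gamma sh ch h : R) : R :=
  (1/gamma) * sqrt ((1 - lam)*(1 - lam - 2*h*gamma - beta)
                    + (2 - lam - 2*beta)*gamma*sh + 2*h*beta*gamma - ch*gamma)
  - (1 - lam)/gamma + h.

Definition is_NE (F : R -> R -> R) (gl gu hl hu g0 h0 : R) : Prop :=
  gl <= g0 <= gu /\ hl <= h0 <= hu /\
  (forall g, gl <= g <= gu -> F g0 h0 <= F g h0) /\
  (forall h, hl <= h <= hu -> F g0 h <= F g0 h0).

From Stdlib Require Import Reals Lra Psatz Lia.
Open Scope R_scope.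

(* Write D(g,h) = 1 - lam + (g - h) gamma for the denominator of the payoff f.
   The whole analysis rests on two algebraic facts: q(g,h) = D(g,h)^2 - Rh(g)
   and m(g,h) = D(g,h)^2 - Rg(h), where Rh(g) and Rg(h) are exactly the
   radicands appearing in r(g) and w(h); and the difference quotients of f in
   h (resp. g) have the sign of D1 D2 - Rh(g) (resp. D1 D2 - Rg(h)).
   Since gamma > 0, D is increasing in g and decreasing in h, and it is
   positive on g >= 0, h <= 1 because lam < 1 - gamma.  Hence the sign of q
   (resp. m) at one point controls the monotonicity of f in h (resp. g) on a
   whole side of that point; this yields best-response criteria for Hank and
   Georgia, and a Nash equilibrium criterion combining both.  The candidates
   r(0) and w(1) are the points where D equals the square root of the radicand,
   i.e. the zeros of q and m, and they lie in the strategy intervals whenever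
   q (resp. m) changes sign there.  Finally the eigenvector hypothesis gives
   lam <= ||W||_inf, so the norm hypothesis yields lam < 1 - gamma, and each
   case of the theorem is one application of the equilibrium criterion. *)

Definition denom (lam gamma g h : R) : R := 1 - lam + (g - h) * gamma.

(* The radicands of r(g) and w(h): the thresholds that D^2 is compared with
   in q and m respectively. *)
Definition hank_radicand (lam beta gamma sh ch g : R) : R :=
  (1 - lam)*(1 - lam - beta + 2*g*gamma)
  - (2 - lam - 2*beta)*gamma*sh - 2*g*beta*gamma + gamma*ch.
Definition georgia_radicand (lam beta gamma sh ch h : R) : R :=
  (1 - lam)*(1 - lam - 2*h*gamma - beta)
  + (2 - lam - 2*beta)*gamma*sh + 2*h*beta*gamma - ch*gamma.

Lemma q_as_square lam beta gamma sh ch g h :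
  q_fun lam beta gamma sh ch g h
  = denom lam gamma g h ^ 2 - hank_radicand lam beta gamma sh ch g.
Proof. unfold q_fun, denom, hank_radicand. ring. Qed.

Lemma m_as_square lam beta gamma sh ch g h :
  m_fun lam beta gamma sh ch g h
  = denom lam gamma g h ^ 2 - georgia_radicand lam beta gamma sh ch h.
Proof. unfold m_fun, denom, georgia_radicand. ring. Qed.

(* The two first-order conditions add up to a multiple of D; this links
   Georgia's and Hank's incentives. *)
Lemma q_plus_m lam beta gamma sh ch g h :
  q_fun lam beta gamma sh ch g h + m_fun lam beta gamma sh ch g h
  = 2 * (beta + gamma * (g - h)) * denom lam gamma g h.
Proof. unfold q_fun, m_fun, denom. ring. Qed.

Lemma m_difference_h lam beta gamma sh ch g h1 h2 :
  m_fun lam beta gamma sh ch g h1 - m_fun lam beta gamma sh ch g h2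
  = gamma * (h2 - h1) * (2*beta + 2*gamma*g - gamma*(h1 + h2)).
Proof. unfold m_fun. ring. Qed.

Lemma f_difference_h lam beta gamma sh ch C g h1 h2 :
  denom lam gamma g h1 <> 0 -> denom lam gamma g h2 <> 0 ->
  f_fun lam beta gamma sh ch C g h2 - f_fun lam beta gamma sh ch C g h1
  = C * (h2 - h1)
    * (denom lam gamma g h1 * denom lam gamma g h2
       - hank_radicand lam beta gamma sh ch g)
    / (denom lam gamma g h1 * denom lam gamma g h2).
Proof. unfold f_fun, denom, hank_radicand. intros. field. split; assumption. Qed.

Lemma f_difference_g lam beta gamma sh ch C g1 g2 h :
  denom lam gamma g1 h <> 0 -> denom lam gamma g2 h <> 0 ->
  f_fun lam beta gamma sh ch C g2 h - f_fun lam beta gamma sh ch C g1 h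
  = C * (g2 - g1)
    * (denom lam gamma g2 h * denom lam gamma g1 h
       - georgia_radicand lam beta gamma sh ch h)
    / (denom lam gamma g2 h * denom lam gamma g1 h).
Proof. unfold f_fun, denom, georgia_radicand. intros. field. split; assumption. Qed.

Lemma quotient_nonneg C x u v E :
  0 <= C -> 0 <= x -> 0 < v <= u -> E <= v ^ 2 ->
  0 <= C * x * (u * v - E) / (u * v).
Proof.
  intros HC Hx Huv HE.
  assert (Hprod : E <= u * v) by nra.
  unfold Rdiv. apply Rmult_le_pos.
  - apply Rmult_le_pos; [apply Rmult_le_pos|]; lra.
  - left. apply Rinv_0_lt_compat. nra.
Qed.

Lemma quotient_nonpos C x u v E :
  0 <= C -> 0 <= x -> 0 < v <= u -> u ^ 2 <= E ->
  C * x * (u * v - E) / (u * v) <= 0.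
Proof.
  intros HC Hx Huv HE.
  assert (Hprod : 0 <= C * x * (E - u * v)) by
    (apply Rmult_le_pos; [apply Rmult_le_pos|]; nra).
  unfold Rdiv. rewrite <- (Ropp_involutive (C * x * (u * v - E))).
  replace (- (C * x * (u * v - E))) with (C * x * (E - u * v)) by ring.
  assert (0 < / (u * v)) by (apply Rinv_0_lt_compat; nra).
  nra.
Qed.

Lemma le_sqrt_of_sq_le u E : 0 <= u -> u ^ 2 <= E -> u <= sqrt E.
Proof. intros Hu HE. rewrite <- (sqrt_pow2 u Hu). apply sqrt_le_1_alt, HE. Qed.

Lemma sqrt_le_of_le_sq u E : 0 <= u -> E <= u ^ 2 -> sqrt E <= u.
Proof. intros Hu HE. rewrite <- (sqrt_pow2 u Hu). apply sqrt_le_1_alt, HE. Qed.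

Section Game.
Variables lam beta gamma sh ch C : R.
Hypothesis gamma_pos : 0 < gamma.
Hypothesis gamma_le_beta : gamma <= beta.
Hypothesis lam_small : lam < 1 - gamma.
Hypothesis C_pos : 0 < C.

Local Notation F := (f_fun lam beta gamma sh ch C).
Local Notation q := (q_fun lam beta gamma sh ch).
Local Notation m := (m_fun lam beta gamma sh ch).
Local Notation D := (denom lam gamma).
Local Notation r := (r_fun lam beta gamma sh ch).
Local Notation w := (w_fun lam beta gamma sh ch).

Lemma denom_pos g h : 0 <= g -> h <= 1 -> 0 < D g h.
Proof. unfold denom. intros. nra. Qed.

Lemma denom_antitone_h g h1 h2 : h1 <= h2 -> D g h2 <= D g h1.
Proof. unfold denom. intros. nra. Qed.

Lemma denom_monotone_g g1 g2 h : g1 <= g2 -> D g1 h <= D g2 h.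
Proof. unfold denom. intros. nra. Qed.

Lemma m_antitone_h g h1 h2 : 0 <= g -> h1 <= h2 <= 1 -> m g h2 <= m g h1.
Proof.
  intros Hg Hh. enough (0 <= m g h1 - m g h2) by lra.
  rewrite m_difference_h. apply Rmult_le_pos; [apply Rmult_le_pos|]; nra.
Qed.

Lemma q_nonneg_of_m_nonpos g h : 0 <= g -> h <= 1 -> m g h <= 0 -> 0 <= q g h.
Proof.
  intros Hg Hh Hm. pose proof (q_plus_m lam beta gamma sh ch g h) as Hsum.
  pose proof (denom_pos g h Hg Hh).
  assert (0 <= beta + gamma * (g - h)) by nra.
  assert (0 <= 2 * (beta + gamma * (g - h)) * D g h) by
    (apply Rmult_le_pos; lra).
  lra.
Qed.

Lemma F_increasing_h g h1 h2 :
  0 <= g -> h1 <= h2 <= 1 -> 0 <= q g h2 -> F g h1 <= F g h2.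
Proof.
  intros Hg Hh Hq. rewrite q_as_square in Hq.
  pose proof (denom_pos g h2 Hg (proj2 Hh)).
  pose proof (denom_antitone_h g h1 h2 (proj1 Hh)).
  enough (0 <= F g h2 - F g h1) by lra.
  rewrite f_difference_h by lra.
  apply quotient_nonneg; lra.
Qed.

Lemma F_decreasing_h g h1 h2 :
  0 <= g -> h1 <= h2 <= 1 -> q g h1 <= 0 -> F g h2 <= F g h1.
Proof.
  intros Hg Hh Hq. rewrite q_as_square in Hq.
  pose proof (denom_pos g h2 Hg (proj2 Hh)).
  pose proof (denom_antitone_h g h1 h2 (proj1 Hh)).
  enough (F g h2 - F g h1 <= 0) by lra.
  rewrite f_difference_h by lra.
  apply quotient_nonpos; lra.
Qed.

Lemma F_increasing_g g1 g2 h :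
  0 <= g1 <= g2 -> h <= 1 -> 0 <= m g1 h -> F g1 h <= F g2 h.
Proof.
  intros Hg Hh Hm. rewrite m_as_square in Hm.
  pose proof (denom_pos g1 h (proj1 Hg) Hh).
  pose proof (denom_monotone_g g1 g2 h (proj2 Hg)).
  enough (0 <= F g2 h - F g1 h) by lra.
  rewrite f_difference_g by lra.
  apply quotient_nonneg; lra.
Qed.

Lemma F_decreasing_g g1 g2 h :
  0 <= g1 <= g2 -> h <= 1 -> m g2 h <= 0 -> F g2 h <= F g1 h.
Proof.
  intros Hg Hh Hm. rewrite m_as_square in Hm.
  pose proof (denom_pos g1 h (proj1 Hg) Hh).
  pose proof (denom_monotone_g g1 g2 h (proj2 Hg)).
  enough (F g2 h - F g1 h <= 0) by lra.
  rewrite f_difference_g by lra.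
  apply quotient_nonpos; lra.
Qed.

Lemma hank_best_response g lo hi h0 :
  0 <= g -> lo <= h0 <= hi -> hi <= 1 ->
  (lo < h0 -> 0 <= q g h0) -> (h0 < hi -> q g h0 <= 0) ->
  forall h, lo <= h <= hi -> F g h <= F g h0.
Proof.
  intros Hg Hh0 Hhi Hleft Hright h Hh.
  destruct (Rtotal_order h h0) as [Hlt | [Heq | Hgt]].
  - apply F_increasing_h; [lra | lra | apply Hleft; lra].
  - subst h. apply Rle_refl.
  - apply F_decreasing_h; [lra | lra | apply Hright; lra].
Qed.

Lemma georgia_best_response h lo hi g0 :
  0 <= lo -> lo <= g0 <= hi -> h <= 1 ->
  (lo < g0 -> m g0 h <= 0) -> (g0 < hi -> 0 <= m g0 h) ->
  forall g, lo <= g <= hi -> F g0 h <= F g h.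
Proof.
  intros Hlo Hg0 Hh Hleft Hright g Hg.
  destruct (Rtotal_order g g0) as [Hlt | [Heq | Hgt]].
  - apply F_decreasing_g; [lra | lra | apply Hleft; lra].
  - subst g. apply Rle_refl.
  - apply F_increasing_g; [lra | lra | apply Hright; lra].
Qed.

Lemma nash_criterion glo ghi hlo hhi g0 h0 :
  0 <= glo -> glo <= g0 <= ghi -> hlo <= h0 <= hhi -> hhi <= 1 ->
  (glo < g0 -> m g0 h0 <= 0) -> (g0 < ghi -> 0 <= m g0 h0) ->
  (hlo < h0 -> 0 <= q g0 h0) -> (h0 < hhi -> q g0 h0 <= 0) ->
  is_NE F glo ghi hlo hhi g0 h0.
Proof.
  intros Hglo Hg0 Hh0 Hhhi Hm1 Hm2 Hq1 Hq2.
  split; [lra | split; [lra | split]].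
  - apply georgia_best_response; lra.
  - apply hank_best_response; lra.
Qed.

Lemma denom_at_r g :
  D g (r g) = sqrt (hank_radicand lam beta gamma sh ch g).
Proof. unfold denom, r_fun, hank_radicand. field. lra. Qed.

Lemma denom_at_w h :
  D (w h) h = sqrt (georgia_radicand lam beta gamma sh ch h).
Proof. unfold denom, w_fun, georgia_radicand. field. lra. Qed.

Lemma hank_critical_point g lo hi :
  0 <= g -> lo <= hi -> hi <= 1 -> 0 <= q g lo -> q g hi <= 0 ->
  lo <= r g <= hi /\ q g (r g) = 0.
Proof.
  intros Hg Hlohi Hhi Hqlo Hqhi.
  rewrite q_as_square in Hqlo, Hqhi.
  set (E := hank_radicand lam beta gamma sh ch g) in *.
  pose proof (denom_pos g lo Hg ltac:(lra)).
  pose proof (denom_pos g hi Hg Hhi).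
  assert (HE : 0 <= E) by nra.
  assert (D g hi <= sqrt E) by (apply le_sqrt_of_sq_le; lra).
  assert (sqrt E <= D g lo) by (apply sqrt_le_of_le_sq; lra).
  pose proof (denom_at_r g) as Hr. fold E in Hr.
  split.
  - unfold denom in *. split; nra.
  - rewrite q_as_square, Hr, pow2_sqrt by exact HE. fold E. ring.
Qed.

Lemma georgia_critical_point h lo hi :
  0 <= lo -> lo <= hi -> h <= 1 -> m lo h <= 0 -> 0 <= m hi h ->
  lo <= w h <= hi /\ m (w h) h = 0.
Proof.
  intros Hlo Hlohi Hh Hmlo Hmhi.
  rewrite m_as_square in Hmlo, Hmhi.
  set (E := georgia_radicand lam beta gamma sh ch h) in *.
  pose proof (denom_pos lo h Hlo Hh).
  pose proof (denom_pos hi h ltac:(lra) Hh).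
  assert (HE : 0 <= E) by nra.
  assert (D lo h <= sqrt E) by (apply le_sqrt_of_sq_le; lra).
  assert (sqrt E <= D hi h) by (apply sqrt_le_of_le_sq; lra).
  pose proof (denom_at_w h) as Hw. fold E in Hw.
  split.
  - unfold denom in *. split; nra.
  - rewrite m_as_square, Hw, pow2_sqrt by exact HE. fold E. ring.
Qed.

End Game.

Lemma sumR_ext n f g :
  (forall i, (i < n)%nat -> f i = g i) -> sumR n f = sumR n g.
Proof.
  induction n as [|k IH]; simpl; intros H; [reflexivity|].
  rewrite IH, H; [reflexivity | lia | intros; apply H; lia].
Qed.

Lemma sumR_le n f g :
  (forall i, (i < n)%nat -> f i <= g i) -> sumR n f <= sumR n g.
Proof.
  induction n as [|k IH]; simpl; intros H; [lra|].
  apply Rplus_le_compat; [apply IH; intros; apply H; lia | apply H; lia].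
Qed.

Lemma sumR_pos n f :
  (1 <= n)%nat -> (forall i, (i < n)%nat -> 0 < f i) -> 0 < sumR n f.
Proof.
  induction n as [|k IH]; simpl; intros Hn H; [lia|].
  destruct k as [|k].
  - simpl. specialize (H 0%nat ltac:(lia)). lra.
  - pose proof (IH ltac:(lia) ltac:(intros; apply H; lia)).
    specialize (H (S k) ltac:(lia)). lra.
Qed.

Lemma sumR_plus n f g : sumR n (fun i => f i + g i) = sumR n f + sumR n g.
Proof. induction n as [|k IH]; simpl; [ring | rewrite IH; ring]. Qed.

Lemma sumR_scal n a f : sumR n (fun i => a * f i) = a * sumR n f.
Proof. induction n as [|k IH]; simpl; [ring | rewrite IH; ring]. Qed.

Lemma sumR_swap n k (G : nat -> nat -> R) :
  sumR n (fun i => sumR k (fun j => G i j))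
  = sumR k (fun j => sumR n (fun i => G i j)).
Proof.
  induction n as [|n IH]; simpl.
  - induction k as [|k IHk]; simpl; [reflexivity | rewrite <- IHk; ring].
  - rewrite IH, <- sumR_plus. reflexivity.
Qed.

Lemma bigmax_ge n f i : (i < n)%nat -> f i <= bigmax n f.
Proof.
  induction n as [|k IH]; simpl; intros Hi; [lia|].
  destruct (Nat.eq_dec i k) as [-> | Hne].
  - apply Rmax_r.
  - eapply Rle_trans; [apply IH; lia | apply Rmax_l].
Qed.

Lemma bigmax_le n f M :
  (1 <= n)%nat -> (forall i, (i < n)%nat -> f i <= M) -> bigmax n f <= M.
Proof.
  induction n as [|k IH]; simpl; intros Hn H; [lia|].
  apply Rmax_lub; [| apply H; lia].
  destruct k as [|k]; [simpl; apply H; lia | apply IH; [lia | intros; apply H; lia]].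
Qed.

Lemma bigmin_ge n f M :
  (1 <= n)%nat -> (forall i, (i < n)%nat -> M <= f i) -> M <= bigmin n f.
Proof.
  induction n as [|k IH]; simpl; intros Hn H; [lia|].
  apply Rmin_glb; [| apply H; lia].
  destruct k as [|k]; [simpl; apply H; lia | apply IH; [lia | intros; apply H; lia]].
Qed.

(* A nonnegative matrix with a positive left eigenvector c for lam has
   lam <= ||W||_inf: sum the eigen-equations weighted by c. *)
Lemma eigenvalue_le_norm_inf n (W : nat -> nat -> R) c lam :
  (1 <= n)%nat ->
  (forall i j, (i < n)%nat -> (j < n)%nat -> 0 <= W i j) ->
  (forall i, (i < n)%nat -> 0 < c i) ->
  (forall i, (i < n)%nat -> sumR n (fun j => W j i * c j) = lam * c i) ->
  lam <= norm_inf n W.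
Proof.
  intros Hn HW Hc Heig.
  assert (Hsum : lam * sumR n c
                 = sumR n (fun j => c j * sumR n (fun i => Rabs (W j i)))).
  { rewrite <- sumR_scal.
    rewrite (sumR_ext n _ (fun i => sumR n (fun j => W j i * c j)))
      by (intros; rewrite Heig; auto).
    rewrite sumR_swap. apply sumR_ext. intros j Hj.
    rewrite <- sumR_scal. apply sumR_ext. intros i Hi.
    rewrite Rabs_right by (apply Rle_ge, HW; auto). ring. }
  assert (Hbound : sumR n (fun j => c j * sumR n (fun i => Rabs (W j i)))
                   <= sumR n (fun j => norm_inf n W * c j)).
  { apply sumR_le. intros j Hj. pose proof (Hc j Hj).
    pose proof (bigmax_ge n (fun i => sumR n (fun k => Rabs (W i k))) j Hj).
    unfold norm_inf. nra. }
  rewrite sumR_scal in Hbound.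
  pose proof (sumR_pos n c Hn Hc). nra.
Qed.

Theorem theorem3 (n : nat) (W : nat -> nat -> R) (c s : nat -> R)
  (lam beta gamma : R) :
  (1 <= n)%nat ->
  (forall i j, (i < n)%nat -> (j < n)%nat -> 0 <= W i j) ->
  (forall i, (i < n)%nat -> W i i = 0) ->
  is_spectral_radius n W lam ->
  (forall i, (i < n)%nat -> 0 < c i) ->
  (forall i, (i < n)%nat -> sumR n (fun j => W j i * c j) = lam * c i) ->
  beta >= gamma -> gamma >= 0 ->
  1 - Rmax (norm_inf n W) (norm_1 n W) > Rmax (2 * beta) (4 * gamma) ->
  (forall i, (i < n)%nat -> 0 <= s i <= 1) ->
  gamma > 0 ->
  let sbar := bigmax n s in
  let slow := bigmin n s in
  let sh := shat n c s in
  let ch := chi n W c s in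
  let F := fun g h => f_fun lam beta gamma sh ch (sumR n c) g h in
  let q := q_fun lam beta gamma sh ch in
  let m := m_fun lam beta gamma sh ch in
  let NE := is_NE F 0 slow sbar 1 in
  (* (i) *)
  (m 0 1 >= 0 ->
     (q 0 1 >= 0 -> NE 0 1) /\
     (q 0 1 < 0 -> q 0 sbar <= 0 -> NE 0 sbar) /\
     (q 0 1 < 0 -> q 0 sbar > 0 -> NE 0 (r_fun lam beta gamma sh ch 0))) /\
  (* (ii) *)
  (m 0 1 < 0 -> m slow 1 <= 0 -> NE slow 1) /\
  (* (iii) *)
  (m 0 1 < 0 -> m slow 1 > 0 -> NE (w_fun lam beta gamma sh ch 1) 1).
Proof.
  intros Hn HW _ _ Hc Heig Hbg _ Hnorm Hs Hg sbar slow sh ch F q m NE.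
  unfold NE, F, q, m.
  pose proof (sumR_pos n c Hn Hc) as HC.
  assert (Hlam : lam < 1 - gamma).
  { pose proof (eigenvalue_le_norm_inf n W c lam Hn HW Hc Heig).
    pose proof (Rmax_l (norm_inf n W) (norm_1 n W)).
    pose proof (Rmax_r (2 * beta) (4 * gamma)). lra. }
  assert (Hslow : 0 <= slow) by (apply bigmin_ge; [| intros; apply Hs]; auto).
  assert (Hsbar : sbar <= 1) by (apply bigmax_le; [| intros; apply Hs]; auto).
  assert (Hm_h : forall h, h <= 1 ->
            m_fun lam beta gamma sh ch 0 1 <= m_fun lam beta gamma sh ch 0 h)
    by (intros; apply m_antitone_h; lra).
  pose proof (q_nonneg_of_m_nonpos lam beta gamma sh ch Hg ltac:(lra) Hlam)
    as Hqm.
  split; [intros Hm01; split; [|split] | split].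
  -
    intros Hq01. apply nash_criterion; lra.
  - (* Hank prefers the lower end sbar; m(0,sbar) >= m(0,1) >= 0 *)
    intros Hq01 Hqsbar. pose proof (Hm_h sbar Hsbar).
    apply nash_criterion; lra.
  - (* q(0,.) changes sign on [sbar,1]: Hank's interior optimum r(0) *)
    intros Hq01 Hqsbar.
    destruct (hank_critical_point lam beta gamma sh ch Hg Hlam 0 sbar 1)
      as [Hr Hqr]; try lra.
    pose proof (Hm_h (r_fun lam beta gamma sh ch 0) ltac:(lra)).
    apply nash_criterion; lra.
  - (* Georgia prefers slow; Hank's q >= 0 there since m <= 0 *)
    intros Hm01 Hmslow. pose proof (Hqm slow 1 Hslow ltac:(lra) Hmslow).
    apply nash_criterion; lra.
  - (* m(.,1) changes sign on [0,slow]: Georgia's interior optimum w(1) *)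
    intros Hm01 Hmslow.
    destruct (georgia_critical_point lam beta gamma sh ch Hg Hlam 1 0 slow)
      as [Hw Hmw]; try lra.
    pose proof (Hqm (w_fun lam beta gamma sh ch 1) 1 ltac:(lra) ltac:(lra) ltac:(lra)).
    apply nash_criterion; lra.
Qed.
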